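(* Let $L$ be the adjoint module of $gl(1|1)$; it is of type $\mathrm{III}_1$. For every $n\ge1$, \[ L^{\otimes n}\cong\mathrm{III}_1^{\otimes n}\cong\bigoplus_{\ell=-n+2}^{n}\binom{2n-2}{n-\ell}\,\mathrm{III}_\ell \] (parities of highest-weight vectors suppressed).
   Context: $gl(1|1)$ is the Lie superalgebra with basis $H,G$ (even), $Q_+,Q_-$ (odd), nonzero supercommutators $[G,Q_\pm]=\pm Q_\pm$, $[Q_+,Q_-]=H$ (so $Q_+Q_-+Q_-Q_+=H$ in the enveloping algebra). A weight is a $G$-eigenvalue. $\mathrm{III}_\gamma$ denotes the module with basis $v,Q_+v,Q_-v,Q_+Q_-v$ (all nonzero) of $G$-weights $\gamma-1,\gamma,\gamma-2,\gamma-1$, with $H$ acting by $0$ and $Q_-Q_+v=-Q_+Q_-v$ (with either parity of the highest-weight vector $Q_+v$). Tensor products of $\mathbb Z_2$-graded modules carry the usual super action. *)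

(* Finite-dimensional Z/2-graded representations of gl(1|1)
   over the complex algebraic numbers algC, encoded by matrices acting on
   column vectors (operator X acts as v |-> X *m v). *)
From HB Require Import structures.
From mathcomp Require Import all_boot all_order all_algebra all_field.
From mathcomp Require Import mxtens.
Set Implicit Arguments. Unset Strict Implicit. Unset Printing Implicit Defensive.
Import Order.TTheory GRing.Theory Num.Theory.
Local Open Scope ring_scope.

(* A super representation: a finite-dim space F^dim, its parity operator
   P (+1 on even, -1 on odd vectors) and the action of H, G, Q+, Q-. *)
Record srep := SRep {
  sdim : nat;
  sP  : 'M[algC]_sdim;
  sH  : 'M[algC]_sdim;
  sG  : 'M[algC]_sdim;
  sQp : 'M[algC]_sdim;
  sQm : 'M[algC]_sdim }.

(* Defining relations of a gl(1|1)-supermodule (not needed in the statement,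
   recorded for reference): P involutive, H,G even, Q odd, supercommutators. *)
Definition is_gl11_smodule (V : srep) : Prop :=
  let: SRep _ P H G Qp Qm := V in
  [/\ [/\ P *m P = 1%:M, P *m H = H *m P, P *m G = G *m P,
          P *m Qp = - (Qp *m P) & P *m Qm = - (Qm *m P)],
      [/\ H *m G = G *m H, H *m Qp = Qp *m H & H *m Qm = Qm *m H],
      [/\ G *m Qp - Qp *m G = Qp, G *m Qm - Qm *m G = - Qm
        & Qp *m Qm + Qm *m Qp = H]
    & Qp *m Qp = 0 /\ Qm *m Qm = 0].

(* Tensor product with the super sign rule:
   X(v (x) w) = Xv (x) w + (-1)^{|X||v|} v (x) Xw. *)
Definition stensor (V W : srep) : srep :=
  SRep (sP V *t sP W)
       (sH V *t 1%:M + 1%:M *t sH W)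
       (sG V *t 1%:M + 1%:M *t sG W)
       (sQp V *t 1%:M + sP V *t sQp W)
       (sQm V *t 1%:M + sP V *t sQm W).

Definition strivial : srep := @SRep 1 1%:M 0 0 0 0.

Fixpoint stpow (V : srep) (n : nat) : srep :=
  match n with 0 => strivial | n'.+1 => stensor (stpow V n') V end.

Definition sdsum (V W : srep) : srep :=
  SRep (block_mx (sP V) 0 0 (sP W)) (block_mx (sH V) 0 0 (sH W))
       (block_mx (sG V) 0 0 (sG W)) (block_mx (sQp V) 0 0 (sQp W))
       (block_mx (sQm V) 0 0 (sQm W)).

Definition szero : srep := @SRep 0 0 0 0 0 0.

Definition sbigsum (s : seq srep) : srep := foldr sdsum szero s.

(* Isomorphism of supermodules: an invertible, even (parity-preserving)
   intertwiner. T : W -> V. *)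
Definition siso (V W : srep) : Prop :=
  exists (T : 'M[algC]_(sdim V, sdim W)) (S : 'M[algC]_(sdim W, sdim V)),
    [/\ T *m S = 1%:M, S *m T = 1%:M,
        sP V *m T = T *m sP W, sH V *m T = T *m sH W
      & [/\ sG V *m T = T *m sG W, sQp V *m T = T *m sQp W
          & sQm V *m T = T *m sQm W]].

Definition e4 (k : nat) : 'cV[algC]_4 := delta_mx (inord k) 0.

Definition mx_of_basis (f : nat -> 'cV[algC]_4) : 'M[algC]_4 :=
  \matrix_(i < 4, j < 4) f j i 0.

(* The module III_gamma, with basis
   e0 = v, e1 = Q+ v, e2 = Q- v, e3 = Q+ Q- v;
   b = parity of v (false = even), so the highest-weight vector Q+ v
   has parity ~~ b. *)
Definition III (gamma : int) (b : bool) : srep :=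
  let s : algC := (-1) ^+ b in
  let g : algC := gamma%:~R in
  @SRep 4
    (mx_of_basis (fun j => match j with
                           | 0 => s *: e4 0 | 1 => - s *: e4 1
                           | 2 => - s *: e4 2 | _ => s *: e4 3 end))
    0
    (mx_of_basis (fun j => match j with
                           | 0 => (g - 1) *: e4 0 | 1 => g *: e4 1
                           | 2 => (g - 2) *: e4 2 | _ => (g - 1) *: e4 3 end))
    (mx_of_basis (fun j => match j with
                           | 0 => e4 1 | 2 => e4 3 | _ => 0 end))
    (mx_of_basis (fun j => match j with
                           | 0 => e4 2 | 1 => - e4 3 | _ => 0 end)).

(* The adjoint module of gl(1|1), basis e0 = H, e1 = G, e2 = Q+, e3 = Q-
   (H, G even; Q+-, odd); X acts by the supercommutator ad_X(Y) = [X, Y]. *)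
Definition gl11_bracket (x y : nat) : 'cV[algC]_4 :=
  match x, y with
  | 1, 2 => e4 2
  | 1, 3 => - e4 3
  | 2, 1 => - e4 2
  | 3, 1 => e4 3
  | 2, 3 => e4 0
  | 3, 2 => e4 0
  | _, _ => 0
  end.

Definition adjoint_gl11 : srep :=
  @SRep 4
    (mx_of_basis (fun j => if (j < 2)%N then e4 j else - e4 j))
    (mx_of_basis (gl11_bracket 0))
    (mx_of_basis (gl11_bracket 1))
    (mx_of_basis (gl11_bracket 2))
    (mx_of_basis (gl11_bracket 3)).

Definition weight_range (n : nat) : seq int :=
  [seq (2 - (n%:Z) + k%:Z)%R | k <- iota 0 (2 * n - 1)].

Definition decomposition (n : nat) (par : int -> nat -> bool) : srep :=
  sbigsum (flatten
    [seq [seq III l (par l j) | j <- iota 0 'C(2 * n - 2, `|n%:Z - l|%N)]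
    | l <- weight_range n]).

From mathcomp Require Import all_boot all_order all_algebra all_field.
From mathcomp Require Import mxtens ring zify.
Set Implicit Arguments. Unset Strict Implicit. Unset Printing Implicit Defensive.
Import Order.TTheory GRing.Theory Num.Theory.
Local Open Scope ring_scope.

(* The adjoint module is III_1 after an explicit change of basis.  In
   III_g (x) III_1 (where H acts by 0) the four vectors x (x) v, for x in the
   basis v, Q+ v, Q- v, Q+ Q- v of III_g, have weights g - 1, g, g - 2, g - 1,
   so each spans a copy of III_g, III_(g+1), III_(g-1), III_g; these copies
   fill the 16-dimensional space, which is seen by writing down the
   projections onto them.  Hence III_1^(x)(m+1) is a direct sum of modules
   III_l whose multiplicities satisfy c_(m+1)(l) = 2 c_m(l) + c_m(l-1)
   + c_m(l+1), the recursion satisfied by binom(2m, m+1-l) (Pascal's rule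
   applied twice).  Grouping the summands by weight gives the decomposition. *)

Section TensorLinear.
Variables (R : comPzRingType) (m n p q : nat).
Implicit Types (A B : 'M[R]_(m, n)) (C D : 'M[R]_(p, q)).

Lemma tensmxDl A B C : (A + B) *t C = A *t C + B *t C.
Proof. by apply/matrixP=> i j; rewrite !mxE mulrDl. Qed.

Lemma tensmxDr A C D : A *t (C + D) = A *t C + A *t D.
Proof. by apply/matrixP=> i j; rewrite !mxE mulrDr. Qed.

Lemma tensmxNl A C : (- A) *t C = - (A *t C).
Proof. by apply/matrixP=> i j; rewrite !mxE mulNr. Qed.

Lemma tensmxNr A C : A *t (- C) = - (A *t C).
Proof. by apply/matrixP=> i j; rewrite !mxE mulrN. Qed.

Lemma tensmxZl (a : R) A C : (a *: A) *t C = a *: (A *t C).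
Proof. by apply/matrixP=> i j; rewrite !mxE mulrA. Qed.

Lemma tensmxZr (a : R) A C : A *t (a *: C) = a *: (A *t C).
Proof. by apply/matrixP=> i j; rewrite !mxE mulrCA. Qed.

Lemma tensmxBl A B C : (A - B) *t C = A *t C - B *t C.
Proof. by rewrite tensmxDl tensmxNl. Qed.

Lemma tensmxBr A C D : A *t (C - D) = A *t C - A *t D.
Proof. by rewrite tensmxDr tensmxNr. Qed.

End TensorLinear.

Lemma tensmx11 (R : comPzRingType) m n : (1%:M : 'M[R]_m) *t (1%:M : 'M[R]_n) = 1%:M.
Proof.
apply/matrixP=> i j.
case: (mxtens_indexP i)=> i0 i1; case: (mxtens_indexP j)=> j0 j1.
rewrite tensmxE !mxE (inj_eq (can_inj (@mxtens_indexK m n))) xpair_eqE.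
by case: (i0 == j0); case: (i1 == j1); rewrite ?mulr1 ?mulr0.
Qed.

Definition intertwiner (V W : srep) (T : 'M[algC]_(sdim V, sdim W)) : Prop :=
  [/\ sP V *m T = T *m sP W, sH V *m T = T *m sH W, sG V *m T = T *m sG W,
      sQp V *m T = T *m sQp W & sQm V *m T = T *m sQm W].

Lemma intertwiner_siso V W (T : 'M_(sdim V, sdim W)) S :
  intertwiner T -> T *m S = 1%:M -> S *m T = 1%:M -> siso V W.
Proof. by move=> [? ? ? ? ?] TS ST; exists T, S. Qed.

Lemma siso_intertwiner V W : siso V W ->
  exists T : 'M_(sdim V, sdim W), exists2 S,
    intertwiner T & T *m S = 1%:M /\ S *m T = 1%:M.
Proof. by case=> T [S [TS ST ? ? [? ? ?]]]; exists T, S. Qed.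

Lemma intertwiner1 V : intertwiner (1%:M : 'M_(sdim V)).
Proof. by split; rewrite mulmx1 mul1mx. Qed.

Lemma intertwiner0 V W : intertwiner (0 : 'M_(sdim V, sdim W)).
Proof. by split; rewrite mulmx0 mul0mx. Qed.

Lemma intertwinerM U V W (A : 'M_(sdim U, sdim V)) (B : 'M_(sdim V, sdim W)) :
  intertwiner A -> intertwiner B -> intertwiner (A *m B).
Proof.
case=> a1 a2 a3 a4 a5 [b1 b2 b3 b4 b5].
by split; rewrite mulmxA ?a1 ?a2 ?a3 ?a4 ?a5 -mulmxA ?b1 ?b2 ?b3 ?b4 ?b5 mulmxA.
Qed.

Lemma intertwinerV V W (T : 'M_(sdim V, sdim W)) S :
  intertwiner T -> T *m S = 1%:M -> S *m T = 1%:M -> intertwiner S.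
Proof.
move=> [a1 a2 a3 a4 a5] TS ST.
have flip X Y : X *m T = T *m Y -> S *m X = Y *m S.
  move=> e; rewrite -[S *m X]mulmx1 -TS mulmxA -(mulmxA S X) e.
  by rewrite mulmxA ST mul1mx.
by split; symmetry; apply: flip.
Qed.

Lemma intertwiner_row_mx V X Y (A : 'M_(sdim V, sdim X)) (B : 'M_(sdim V, sdim Y)) :
  intertwiner A -> intertwiner B -> intertwiner (W := sdsum X Y) (row_mx A B).
Proof.
case=> a1 a2 a3 a4 a5 [b1 b2 b3 b4 b5].
by split; rewrite /= mul_mx_row mul_row_block !mulmx0 addr0 add0r
  ?a1 ?a2 ?a3 ?a4 ?a5 ?b1 ?b2 ?b3 ?b4 ?b5.
Qed.

Lemma intertwiner_col_mx X Y W (A : 'M_(sdim X, sdim W)) (B : 'M_(sdim Y, sdim W)) :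
  intertwiner A -> intertwiner B -> intertwiner (V := sdsum X Y) (col_mx A B).
Proof.
case=> a1 a2 a3 a4 a5 [b1 b2 b3 b4 b5].
by split; rewrite /= mul_block_col mul_col_mx !mul0mx addr0 add0r
  ?a1 ?a2 ?a3 ?a4 ?a5 ?b1 ?b2 ?b3 ?b4 ?b5.
Qed.

Lemma intertwiner_tens V V' W W' (A : 'M_(sdim V, sdim V')) (B : 'M_(sdim W, sdim W')) :
  intertwiner A -> intertwiner B ->
  intertwiner (V := stensor V W) (W := stensor V' W') (A *t B).
Proof.
case=> a1 a2 a3 a4 a5 [b1 b2 b3 b4 b5].
by split; rewrite /= ?mulmxDl ?mulmxDr !tensmx_mul ?mul1mx ?mulmx1
  ?a1 ?a2 ?a3 ?a4 ?a5 ?b1 ?b2 ?b3 ?b4 ?b5.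
Qed.

Lemma siso_refl V : siso V V.
Proof. by apply: (intertwiner_siso (intertwiner1 V) (S := 1%:M)); rewrite mulmx1. Qed.

Lemma siso_sym V W : siso V W -> siso W V.
Proof.
case/siso_intertwiner=> T [S iT [TS ST]].
exact: intertwiner_siso (intertwinerV iT TS ST) ST TS.
Qed.

Lemma siso_trans U V W : siso U V -> siso V W -> siso U W.
Proof.
case/siso_intertwiner=> A [A' iA [AA' A'A]] /siso_intertwiner[B [B' iB [BB' B'B]]].
apply: (intertwiner_siso (intertwinerM iA iB) (S := B' *m A')).
- by rewrite mulmxA -(mulmxA A) BB' mulmx1.
- by rewrite mulmxA -(mulmxA B') A'A mulmx1.
Qed.

Lemma siso_stensor V V' W W' :
  siso V V' -> siso W W' -> siso (stensor V W) (stensor V' W').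
Proof.
case/siso_intertwiner=> A [A' iA [AA' A'A]] /siso_intertwiner[B [B' iB [BB' B'B]]].
apply: (@intertwiner_siso (stensor V W) (stensor V' W') _ (A' *t B')
  (intertwiner_tens iA iB)).
- by rewrite tensmx_mul AA' BB' tensmx11.
- by rewrite tensmx_mul A'A B'B tensmx11.
Qed.

Lemma siso_stpow V W n : siso V W -> siso (stpow V n) (stpow W n).
Proof.
by move=> VW; elim: n => [|n IHn] /=; [exact: siso_refl | exact: siso_stensor].
Qed.

Lemma siso_sdsum_split V X Y (A : 'M_(sdim V, sdim X)) (B : 'M_(sdim V, sdim Y))
    (A' : 'M_(sdim X, sdim V)) (B' : 'M_(sdim Y, sdim V)) :
  intertwiner A -> intertwiner B ->
  A' *m A = 1%:M -> B' *m B = 1%:M -> A' *m B = 0 -> B' *m A = 0 ->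
  A *m A' + B *m B' = 1%:M ->
  siso V (sdsum X Y).
Proof.
move=> iA iB eA eB eAB eBA eV.
apply: (@intertwiner_siso V (sdsum X Y) _ (col_mx A' B') (intertwiner_row_mx iA iB)).
- by rewrite mul_row_col.
- by rewrite mul_col_row eA eB eAB eBA -scalar_mx_block.
Qed.

Lemma siso_sdsum X Y X' Y' : siso X X' -> siso Y Y' -> siso (sdsum X Y) (sdsum X' Y').
Proof.
case/siso_intertwiner=> A [A' iA [AA' A'A]] /siso_intertwiner[B [B' iB [BB' B'B]]].
apply: (@siso_sdsum_split (sdsum X Y) X' Y' (col_mx A 0) (col_mx 0 B)
  (row_mx A' 0) (row_mx 0 B')).
- exact: intertwiner_col_mx iA (intertwiner0 _ _).
- exact: intertwiner_col_mx (intertwiner0 _ _) iB.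
- by rewrite mul_row_col mulmx0 addr0.
- by rewrite mul_row_col mul0mx add0r.
- by rewrite mul_row_col mul0mx mulmx0 addr0.
- by rewrite mul_row_col mul0mx mulmx0 addr0.
- by rewrite !mul_col_row !mulmx0 !mul0mx AA' BB' add_block_mx !addr0 !add0r
    -scalar_mx_block.
Qed.

Lemma sdsumC X Y : siso (sdsum X Y) (sdsum Y X).
Proof.
apply: (@siso_sdsum_split (sdsum X Y) Y X (col_mx 0 1%:M) (col_mx 1%:M 0)
  (row_mx 0 1%:M) (row_mx 1%:M 0)).
- exact: intertwiner_col_mx (intertwiner0 _ _) (intertwiner1 _).
- exact: intertwiner_col_mx (intertwiner1 _) (intertwiner0 _ _).
- by rewrite mul_row_col mulmx0 mul1mx add0r.
- by rewrite mul_row_col mulmx0 mul1mx addr0.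
- by rewrite mul_row_col mulmx0 mul0mx addr0.
- by rewrite mul_row_col mulmx0 mul0mx addr0.
- by rewrite !mul_col_row !mulmx0 !mul0mx !mulmx1 add_block_mx !addr0 !add0r
    -scalar_mx_block.
Qed.

Lemma sdsumA X Y Z : siso (sdsum (sdsum X Y) Z) (sdsum X (sdsum Y Z)).
Proof.
apply: (@siso_sdsum_split (sdsum (sdsum X Y) Z) X (sdsum Y Z) (col_mx (col_mx 1%:M 0) 0)
  (block_mx (col_mx 0 1%:M) 0 0 1%:M) (row_mx (row_mx 1%:M 0) 0)
  (block_mx (row_mx 0 1%:M) 0 0 1%:M)).
- apply: intertwiner_col_mx (intertwiner0 _ _).
  exact: intertwiner_col_mx (intertwiner1 _) (intertwiner0 _ _).
- rewrite block_mxEv; apply: intertwiner_col_mx; apply: intertwiner_row_mx;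
    try exact: intertwiner0; try exact: intertwiner1.
  exact: intertwiner_col_mx (intertwiner0 _ _) (intertwiner1 _).
- by rewrite !mul_row_col ?mulmx0 ?mul0mx ?mulmx1 ?addr0.
- by rewrite mulmx_block !mul_row_col ?mulmx0 ?mul0mx ?mulmx1 ?addr0 ?add0r
    -scalar_mx_block.
- by rewrite mul_row_block !mul_row_col ?mulmx0 ?mul0mx ?mulmx1 ?addr0 ?add0r row_mx0.
- by rewrite mul_block_col !mul_row_col ?mulmx0 ?mul0mx ?mulmx1 ?addr0 ?add0r col_mx0.
- rewrite mul_col_row mulmx_block !mul_col_row ?mulmx0 ?mul0mx ?mulmx1 ?mul1mx.
  by rewrite !add_block_mx ?addr0 ?add0r add_block_mx ?addr0 ?add0r -!scalar_mx_block.
Qed.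

Lemma sdsum0l Y : siso Y (sdsum szero Y).
Proof.
apply: (@siso_sdsum_split Y szero Y 0 1%:M 0 1%:M).
- exact: intertwiner0.
- exact: intertwiner1.
- by rewrite flatmx0 [1%:M]flatmx0.
- by rewrite mulmx1.
- by rewrite mul0mx.
- by rewrite mulmx0.
- by rewrite mulmx1 mul0mx add0r.
Qed.

Lemma sdsum0r X : siso X (sdsum X szero).
Proof. exact: siso_trans (sdsum0l X) (sdsumC _ _). Qed.

Lemma stensor_sdsuml X Y Z :
  siso (stensor (sdsum X Y) Z) (sdsum (stensor X Z) (stensor Y Z)).
Proof.
apply: (@siso_sdsum_split (stensor (sdsum X Y) Z) (stensor X Z) (stensor Y Z)
  (col_mx 1%:M 0 *t 1%:M) (col_mx 0 1%:M *t 1%:M)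
  (row_mx 1%:M 0 *t 1%:M) (row_mx 0 1%:M *t 1%:M)).
- apply: intertwiner_tens (intertwiner1 _).
  exact: intertwiner_col_mx (intertwiner1 _) (intertwiner0 _ _).
- apply: intertwiner_tens (intertwiner1 _).
  exact: intertwiner_col_mx (intertwiner0 _ _) (intertwiner1 _).
- by rewrite tensmx_mul mul_row_col ?mulmx1 ?mulmx0 ?addr0 tensmx11.
- by rewrite tensmx_mul mul_row_col ?mulmx1 ?mulmx0 ?add0r tensmx11.
- by rewrite tensmx_mul mul_row_col ?mulmx1 ?mulmx0 ?addr0 tens0mx.
- by rewrite tensmx_mul mul_row_col ?mulmx1 ?mulmx0 ?addr0 tens0mx.
- rewrite !tensmx_mul -tensmxDl !mul_col_row ?mulmx0 ?mul0mx ?mulmx1.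
  by rewrite add_block_mx ?addr0 ?add0r -scalar_mx_block tensmx11.
Qed.

Lemma stensor0l Z : siso (stensor szero Z) szero.
Proof. by exists 0, 0; do ![split]; apply/matrixP=> -[i +] -[j +]. Qed.

Lemma sbigsum_cat s1 s2 :
  siso (sbigsum (s1 ++ s2)) (sdsum (sbigsum s1) (sbigsum s2)).
Proof.
elim: s1 => [|X s1 IHs] /=; first exact: sdsum0l.
exact: siso_trans (siso_sdsum (siso_refl X) IHs) (siso_sym (sdsumA _ _ _)).
Qed.

Lemma sbigsum_catCA s1 s2 s3 :
  siso (sbigsum (s1 ++ s2 ++ s3)) (sbigsum (s2 ++ s1 ++ s3)).
Proof.
have catE s t u : siso (sbigsum (s ++ t ++ u))
    (sdsum (sbigsum s) (sdsum (sbigsum t) (sbigsum u))).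
  exact: siso_trans (sbigsum_cat _ _) (siso_sdsum (siso_refl _) (sbigsum_cat _ _)).
apply: siso_trans (catE _ _ _) (siso_trans _ (siso_sym (catE _ _ _))).
apply: siso_trans (siso_sym (sdsumA _ _ _)) (siso_trans _ (sdsumA _ _ _)).
exact: siso_sdsum (sdsumC _ _) (siso_refl _).
Qed.

Lemma sbigsum_perm (I : eqType) (f : I -> srep) (s s' : seq I) :
  perm_eq s s' -> siso (sbigsum (map f s)) (sbigsum (map f s')).
Proof.
move=> /(catCA_perm_ind (P := fun t => siso (sbigsum (map f s)) (sbigsum (map f t)))).
apply; last exact: siso_refl.
by move=> s1 s2 s3; rewrite !map_cat => /siso_trans; apply; apply: sbigsum_catCA.
Qed.

Lemma siso_sbigsum (I : Type) (f g : I -> srep) (s : seq I) :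
  (forall i, siso (f i) (g i)) -> siso (sbigsum (map f s)) (sbigsum (map g s)).
Proof.
by move=> fg; elim: s => [|i s IHs] /=; [exact: siso_refl | exact: siso_sdsum].
Qed.

Lemma stensor_sbigsuml s Z :
  siso (stensor (sbigsum s) Z) (sbigsum (map (stensor^~ Z) s)).
Proof.
elim: s => [|X s IHs] /=; first exact: stensor0l.
exact: siso_trans (stensor_sdsuml _ _ _) (siso_sdsum (siso_refl _) IHs).
Qed.

Lemma sbigsum_flatten (ss : seq (seq srep)) :
  siso (sbigsum (flatten ss)) (sbigsum (map sbigsum ss)).
Proof.
elim: ss => [|s ss IHs] /=; first exact: siso_refl.
exact: siso_trans (sbigsum_cat _ _) (siso_sdsum (siso_refl _) IHs).
Qed.

Section Commutators.
Variables (R : pzRingType) (n : nat).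
Implicit Types X Y Z : 'M[R]_n.

Definition mx_comm X Y := X *m Y - Y *m X.
Definition mx_acomm X Y := X *m Y + Y *m X.

Lemma mx_commDl X Y Z : mx_comm (X + Y) Z = mx_comm X Z + mx_comm Y Z.
Proof. by rewrite /mx_comm mulmxDl mulmxDr opprD addrACA. Qed.

Lemma mx_commDr X Y Z : mx_comm Z (X + Y) = mx_comm Z X + mx_comm Z Y.
Proof. by rewrite /mx_comm mulmxDl mulmxDr opprD addrACA. Qed.

Lemma mx_acommDl X Y Z : mx_acomm (X + Y) Z = mx_acomm X Z + mx_acomm Y Z.
Proof. by rewrite /mx_acomm mulmxDl mulmxDr addrACA. Qed.

Lemma mx_acommDr X Y Z : mx_acomm Z (X + Y) = mx_acomm Z X + mx_acomm Z Y.
Proof. by rewrite /mx_acomm mulmxDl mulmxDr addrACA. Qed.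

End Commutators.

Lemma mx_comm_tens (R : comPzRingType) m n (A C : 'M[R]_m) (B D : 'M[R]_n) :
  mx_comm (A *t B) (C *t D) = (A *m C) *t (B *m D) - (C *m A) *t (D *m B).
Proof. by rewrite /mx_comm !tensmx_mul. Qed.

Lemma mx_acomm_tens (R : comPzRingType) m n (A C : 'M[R]_m) (B D : 'M[R]_n) :
  mx_acomm (A *t B) (C *t D) = (A *m C) *t (B *m D) + (C *m A) *t (D *m B).
Proof. by rewrite /mx_acomm !tensmx_mul. Qed.

Lemma stensor_gl11_smodule V W :
  is_gl11_smodule V -> is_gl11_smodule W -> is_gl11_smodule (stensor V W).
Proof.
case: V => m P H G Qp Qm; case: W => n P' H' G' Qp' Qm' /=.
move=> [[PP PH PG PQp PQm] [HG HQp HQm] [GQp GQm QpQm] [QpQp QmQm]].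
move=> [[PP' PH' PG' PQp' PQm'] [HG' HQp' HQm'] [GQp' GQm' QpQm'] [QpQp' QmQm']].
rewrite /stensor /=.
split; [split|split|split|split].
- by rewrite tensmx_mul PP PP' tensmx11.
- by rewrite mulmxDl mulmxDr !tensmx_mul !mul1mx !mulmx1 PH PH'.
- by rewrite mulmxDl mulmxDr !tensmx_mul !mul1mx !mulmx1 PG PG'.
- by rewrite mulmxDl mulmxDr !tensmx_mul mulmx1 mul1mx PQp PQp' PP
    tensmxNl tensmxNr opprD.
- by rewrite mulmxDl mulmxDr !tensmx_mul mulmx1 mul1mx PQm PQm' PP
    tensmxNl tensmxNr opprD.
- by rewrite !mulmxDl !mulmxDr !tensmx_mul !mul1mx !mulmx1 HG HG' addrACA.
- by rewrite !mulmxDl !mulmxDr !tensmx_mul !mul1mx !mulmx1 HQp HQp' PH addrACA.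
- by rewrite !mulmxDl !mulmxDr !tensmx_mul !mul1mx !mulmx1 HQm HQm' PH addrACA.
- rewrite -/(mx_comm _ _) mx_commDl !mx_commDr !mx_comm_tens !mul1mx !mulmx1.
  by rewrite -tensmxBl GQp PG !subrr -tensmxBr GQp' addr0 add0r.
- rewrite -/(mx_comm _ _) mx_commDl !mx_commDr !mx_comm_tens !mul1mx !mulmx1.
  by rewrite -tensmxBl GQm PG !subrr -tensmxBr GQm' addr0 add0r tensmxNl tensmxNr opprD.
- rewrite -/(mx_acomm _ _) mx_acommDl !mx_acommDr !mx_acomm_tens !mul1mx !mulmx1.
  rewrite -tensmxDl QpQm -tensmxDl PQp addrN -tensmxDl PQm addNr -tensmxDr QpQm' PP.
  by rewrite !tens0mx add0r addr0.
- rewrite !mulmxDl !mulmxDr !tensmx_mul !mul1mx !mulmx1 QpQp QpQp' PQp PP.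
  by rewrite tensmxNl tens0mx tensmx0 add0r addr0 addrN.
- rewrite !mulmxDl !mulmxDr !tensmx_mul !mul1mx !mulmx1 QmQm QmQm' PQm PP.
  by rewrite tensmxNl tens0mx tensmx0 add0r addr0 addrN.
Qed.

Definition mx4_of_cols n (f : nat -> 'cV[algC]_n) : 'M[algC]_(n, 4) :=
  \matrix_(i < n, k < 4) f k i 0.

Lemma mx4_of_colsE n (f : nat -> 'cV[algC]_n) j :
  (j < 4)%N -> mx4_of_cols f *m e4 j = f j.
Proof.
by move=> lt_j4; rewrite -colE; apply/matrixP=> i k; rewrite !mxE inordK // [k]ord1.
Qed.

Lemma mx_of_basisE (f : nat -> 'cV[algC]_4) j :
  (j < 4)%N -> mx_of_basis f *m e4 j = f j.
Proof. exact: mx4_of_colsE. Qed.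

Lemma mx4_ext n (A B : 'M[algC]_(n, 4)) :
  (forall j, (j < 4)%N -> A *m e4 j = B *m e4 j) -> A = B.
Proof.
move=> eqAB; apply/matrixP=> i k; have := eqAB k (ltn_ord k).
by rewrite /e4 inord_val -!colE => /matrixP/(_ i 0); rewrite !mxE.
Qed.

Ltac mx4_ring :=
  apply: mx4_ext; case=> [|[|[|[|?]]]] // _;
  do 6 rewrite ?mul1mx ?mulmxDl ?mulmxDr ?mulmxBl ?mulmxBr ?mulmxN ?mulNmx
    ?mulmx0 ?mul0mx -?mulmxA -?scalemxAr -?scalemxAl ?mx_of_basisE //=;
  apply/matrixP=> ? ?; rewrite !mxE; ring.

Lemma III_gl11_smodule g b : is_gl11_smodule (III g b).
Proof.
by case: b; rewrite /III /= !(expr0, expr1);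
  do !split; rewrite ?mulmx0 ?mul0mx //; mx4_ring.
Qed.

Lemma is_gl11_smodule_eta V :
  is_gl11_smodule V = is_gl11_smodule (SRep (sP V) (sH V) (sG V) (sQp V) (sQm V)).
Proof. by case: V. Qed.

Section CyclicHom.
Variables (V : srep) (g : int) (b : bool) (w : 'cV[algC]_(sdim V)).
Hypotheses (smodV : is_gl11_smodule V) (H0 : sH V = 0).
Hypotheses (Pw : sP V *m w = (-1) ^+ b *: w) (Gw : sG V *m w = (g%:~R - 1) *: w).

Definition III_hom : 'M[algC]_(sdim V, 4) :=
  mx4_of_cols (fun j => match j with
    | 0 => w | 1 => sQp V *m w | 2 => sQm V *m w | _ => sQp V *m (sQm V *m w) end).

Lemma III_hom_intertwiner : intertwiner (W := III g b) III_hom.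
Proof.
move: smodV; rewrite is_gl11_smodule_eta.
move=> -[[_ _ _ PQp PQm] _ [GQp GQm QpQm] [QpQp QmQm]].
have actP_Qp x : sP V *m (sQp V *m x) = - (sQp V *m (sP V *m x)).
  by rewrite mulmxA PQp mulNmx mulmxA.
have actP_Qm x : sP V *m (sQm V *m x) = - (sQm V *m (sP V *m x)).
  by rewrite mulmxA PQm mulNmx mulmxA.
have actG_Qp x : sG V *m (sQp V *m x) = sQp V *m (sG V *m x) + sQp V *m x.
  by rewrite mulmxA -[sG V *m _](subrK (sQp V *m sG V)) GQp mulmxDl addrC mulmxA.
have actG_Qm x : sG V *m (sQm V *m x) = sQm V *m (sG V *m x) - sQm V *m x.
  by rewrite mulmxA -[sG V *m _](subrK (sQm V *m sG V)) GQm mulmxDl mulNmx addrC mulmxA.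
have actQpQp x : sQp V *m (sQp V *m x) = 0 by rewrite mulmxA QpQp mul0mx.
have actQmQm x : sQm V *m (sQm V *m x) = 0 by rewrite mulmxA QmQm mul0mx.
have actQmQp x : sQm V *m (sQp V *m x) = - (sQp V *m (sQm V *m x)).
  move/eqP: QpQm; rewrite H0 addrC addr_eq0 => /eqP QmQp.
  by rewrite mulmxA QmQp mulNmx mulmxA.
rewrite /intertwiner H0 mul0mx mulmx0; split=> //; apply: mx4_ext;
  case=> [|[|[|[|?]]]] // _; rewrite -!mulmxA /III /= ?mx_of_basisE //=.
all: rewrite -?scalemxAr ?mulmxN ?mulmx0 ?mx4_of_colsE //=.
all: do 2 rewrite ?mulmxDr ?mulmxBr ?mulmxN
  ?actP_Qp ?actP_Qm ?actG_Qp ?actG_Qm ?actQpQp ?actQmQm ?actQmQp.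
all: rewrite ?Pw ?Gw -?scalemxAr ?mulmxN ?mulmx0 ?oppr0.
all: by apply/matrixP=> ? ?; rewrite !mxE; ring.
Qed.
End CyclicHom.

Definition IIIp (p : int * bool) : srep := III p.1 p.2.

Definition cg_step (p : int * bool) : seq (int * bool) :=
  [:: p; (p.1 + 1, ~~ p.2); (p.1 - 1, ~~ p.2); p].

(* [cg_proj_coef s k] is the [k]-th 4 x 16 block of the inverse of the matrix
   whose columns are [x, Q+ x, Q- x, Q+ Q- x] for the four generators
   [x = e_k (x) v] of [III g b (x) III 1], where [s = (-1)^b]. *)
Definition cg_proj_coef (s : algC) (k i a c : nat) : algC :=
  match k, i, a, c with
  | 0, 0, 0, 0 => 1   | 0, 1, 0, 1 => s   | 0, 2, 0, 2 => s   | 0, 3, 0, 3 => 1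
  | 1, 0, 0, 1 => - s | 1, 0, 1, 0 => 1   | 1, 1, 1, 1 => - s | 1, 2, 0, 3 => 1
  | 1, 2, 1, 2 => - s | 1, 3, 1, 3 => 1
  | 2, 0, 0, 2 => - s | 2, 0, 2, 0 => 1   | 2, 1, 0, 3 => -1  | 2, 1, 2, 1 => - s
  | 2, 2, 2, 2 => - s | 2, 3, 2, 3 => 1
  | 3, 0, 0, 3 => 1   | 3, 0, 1, 2 => - s | 3, 0, 2, 1 => s   | 3, 0, 3, 0 => 1
  | 3, 1, 1, 3 => 1   | 3, 1, 3, 1 => s   | 3, 2, 2, 3 => 1   | 3, 2, 3, 2 => s
  | 3, 3, 3, 3 => 1
  | _, _, _, _ => 0
  end.

Definition cg_proj (s : algC) (k : nat) : 'M[algC]_(4, 4 * 4) :=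
  \matrix_(i < 4, j < 4 * 4)
    cg_proj_coef s k i (mxtens_unindex j).1 (mxtens_unindex j).2.

Lemma cg_proj_tens s k a c : (a < 4)%N -> (c < 4)%N ->
  cg_proj s k *m (e4 a *t e4 c) = \col_(i < 4) cg_proj_coef s k i a c.
Proof.
move=> lt_a4 lt_c4.
have -> : e4 a *t e4 c = delta_mx (mxtens_index (inord a : 'I_4, inord c : 'I_4)) 0.
  apply/matrixP=> i j.
  case: (mxtens_indexP i)=> i0 i1; case: (mxtens_indexP j)=> j0 j1.
  rewrite tensmxE !mxE [j0]ord1 [j1]ord1.
  rewrite (inj_eq (can_inj (@mxtens_indexK 4 4))) xpair_eqE.
  have -> : mxtens_index ((0 : 'I_1), (0 : 'I_1)) == 0 by apply/eqP/val_inj.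
  by case: (i0 == inord a); case: (i1 == inord c); rewrite ?mulr1 ?mulr0.
by rewrite -colE; apply/matrixP=> i j; rewrite !mxE mxtens_indexK /= !inordK.
Qed.

Lemma e4E k : (k < 4)%N -> e4 k = \col_(i < 4) ((i : nat) == k)%:R.
Proof.
by move=> lt_k4; apply/matrixP=> i j; rewrite !mxE [j]ord1 eqxx andbT -val_eqE /= inordK.
Qed.

(* [tensmx_mul] lands in ['M_(m * p, 1 * 1)], which does not unify with a
   column vector type. *)
Lemma tensmx_mul_col (R : comPzRingType) m n p q (A : 'M[R]_(m, n)) (B : 'M[R]_(p, q))
    (u : 'cV[R]_n) (v : 'cV[R]_q) :
  (A *t B) *m (u *t v) = (A *m u) *t (B *m v) :> 'cV_(m * p).
Proof. exact: (tensmx_mul A B u v). Qed.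

Definition cg_gen (l : nat) : 'cV[algC]_(4 * 4) := e4 l *t e4 0.

Section ClebschGordan.
Variables (g : int) (b : bool).
Let V := stensor (III g b) (III 1 false).

Lemma cg_proj_hom k l : (k < 4)%N -> (l < 4)%N ->
  cg_proj ((-1) ^+ b) k *m III_hom (V := V) (cg_gen l) = if k == l then 1%:M else 0.
Proof.
case: k => [|[|[|[|?]]]] // _; case: l => [|[|[|[|?]]]] // _;
apply: mx4_ext; case=> [|[|[|[|?]]]] // _; rewrite -mulmxA mx4_of_colsE // /cg_gen /V /=.
all: do 6 rewrite ?mulmxDl ?mulmxDr ?tensmx_mul_col ?mul1mx ?mx_of_basisE //=
  ?tensmxZl ?tensmxZr ?tensmxNl ?tensmxNr ?tens0mx ?tensmx0
  -?scalemxAr ?mulmxN ?mulmx0 ?oppr0 ?addr0 ?add0r.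
all: rewrite ?mul1mx ?mul0mx ?cg_proj_tens // ?e4E //.
all: apply/matrixP=> i z; rewrite !mxE; case: i => [[|[|[|[|?]]]] ?] //=.
all: by case: b; rewrite /= ?expr0 ?expr1; ring.
Qed.

Lemma cg_gen_parity l : (l < 4)%N ->
  sP V *m cg_gen l = (-1) ^+ (nth (g, b) (cg_step (g, b)) l).2 *: cg_gen l.
Proof.
case: l => [|[|[|[|?]]]] // _; rewrite /V /cg_gen /= tensmx_mul_col !mx_of_basisE //=.
all: by rewrite ?tensmxZl ?tensmxZr; case: b; apply/matrixP=> i j; rewrite !mxE /=; ring.
Qed.

Lemma cg_gen_weight l : (l < 4)%N ->
  sG V *m cg_gen l = ((nth (g, b) (cg_step (g, b)) l).1%:~R - 1) *: cg_gen l.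
Proof.
case: l => [|[|[|[|?]]]] // _; rewrite /V /cg_gen /= mulmxDl !tensmx_mul_col mul1mx.
all: rewrite !mx_of_basisE //= ?tensmxZl ?tensmxZr ?intrD ?intrB.
all: by apply/matrixP=> i j; rewrite !mxE; ring.
Qed.

Lemma mul_col_row_1 a c n (A : 'M[algC]_(a, n)) (C : 'M[algC]_(c, n)) B D :
  A *m B = 1%:M -> A *m D = 0 -> C *m B = 0 -> C *m D = 1%:M ->
  col_mx A C *m row_mx B D = 1%:M.
Proof. by move=> AB AD CB CD; rewrite mul_col_row AB AD CB CD -scalar_mx_block. Qed.

Lemma III_tensor_III1 : siso V (sbigsum (map IIIp (cg_step (g, b)))).
Proof.
pose T l := III_hom (V := V) (cg_gen l).
pose S k := cg_proj ((-1) ^+ b) k.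
have homT l : (l < 4)%N -> intertwiner (W := IIIp (nth (g, b) (cg_step (g, b)) l)) (T l).
  move=> lt_l4; apply: III_hom_intertwiner.
  - by apply: stensor_gl11_smodule; apply: III_gl11_smodule.
  - by rewrite /V /= tens0mx tensmx0 addr0.
  - exact: cg_gen_parity.
  - exact: cg_gen_weight.
have ST : col_mx (S 0) (col_mx (S 1) (col_mx (S 2) (col_mx (S 3) (0 : 'M_(0, 16)))))
    *m row_mx (T 0) (row_mx (T 1) (row_mx (T 2) (row_mx (T 3) (0 : 'M_(16, 0))))) = 1%:M.
  have e k l : (k < 4)%N -> (l < 4)%N -> S k *m T l = if k == l then 1%:M else 0.
    exact: cg_proj_hom.
  do 4 (refine (mul_col_row_1 _ _ _ _);
    [ by rewrite e | by rewrite ?mul_mx_row ?e //= ?mulmx0 ?row_mx0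
    | by rewrite ?mul_col_mx ?e //= ?mul0mx ?col_mx0 | ]).
  by rewrite flatmx0 [1%:M]flatmx0.
apply: (@intertwiner_siso V (sbigsum (map IIIp (cg_step (g, b)))) _ _ _
  (@mulmx1C _ 16 _ _ ST) ST).
apply: intertwiner_row_mx (homT 0 _) _ => //.
apply: intertwiner_row_mx (homT 1 _) _ => //.
apply: intertwiner_row_mx (homT 2 _) _ => //.
exact: intertwiner_row_mx (homT 3 _) (intertwiner0 _ _).
Qed.

End ClebschGordan.

(* [v, Q+ v, Q- v, Q+ Q- v] is sent to [-G, Q+, -Q-, -H]. *)
Lemma adjoint_gl11_III1 : siso adjoint_gl11 (III 1 false).
Proof.
pose T := mx_of_basis (fun j => match j with
  | 0 => - e4 1 | 1 => e4 2 | 2 => - e4 3 | _ => - e4 0 end).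
pose S := mx_of_basis (fun j => match j with
  | 0 => - e4 3 | 1 => - e4 0 | 2 => e4 1 | _ => - e4 2 end).
apply: (@intertwiner_siso adjoint_gl11 (III 1 false) T S); rewrite /S /T.
- by split; rewrite /adjoint_gl11 /III /=; mx4_ring.
- by mx4_ring.
- by mx4_ring.
Qed.

Lemma tens1mx4 (A : 'M[algC]_4) : (1%:M : 'M[algC]_1) *t A = A.
Proof.
apply/matrixP=> i j.
case: (mxtens_indexP i)=> i0 i1; case: (mxtens_indexP j)=> j0 j1.
rewrite tensmxE [i0]ord1 [j0]ord1 !mxE eqxx mul1r.
by congr (A _ _); apply: val_inj.
Qed.

Lemma stpow1_III g b : siso (stpow (III g b) 1) (III g b).
Proof.
apply: (@intertwiner_siso (stpow (III g b) 1) (III g b) (1%:M : 'M_4) 1%:M);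
  rewrite ?mulmx1 //.
by split; rewrite /= ?tens0mx ?add0r tens1mx4 mulmx1 mul1mx.
Qed.

Fixpoint III1_labels (m : nat) : seq (int * bool) :=
  if m is m'.+1 then flatten (map cg_step (III1_labels m')) else [:: (1, false)].

Lemma stpow_III1 m : siso (stpow (III 1 false) m.+1) (sbigsum (map IIIp (III1_labels m))).
Proof.
elim: m => [|m IHm].
  exact: siso_trans (stpow1_III _ _) (sdsum0r _).
apply: siso_trans (siso_stensor IHm (siso_refl (III 1 false))) _.
apply: siso_trans (stensor_sbigsuml _ _) _; rewrite -map_comp.
apply: siso_trans (@siso_sbigsum _ _ (fun p => sbigsum (map IIIp (cg_step p))) _ _) _.
  by case=> g b; apply: III_tensor_III1.
rewrite /= map_flatten -map_comp.
apply: siso_sym; apply: siso_trans (sbigsum_flatten _) _.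
by rewrite -map_comp; apply: siso_refl.
Qed.

Definition weight_mult (l : int) (L : seq (int * bool)) : nat :=
  count (fun p : int * bool => p.1 == l) L.

Lemma weight_mult_cg_step L l :
  weight_mult l (flatten (map cg_step L)) =
  (2 * weight_mult l L + weight_mult (l - 1) L + weight_mult (l + 1) L)%N.
Proof.
rewrite /weight_mult; elim: L => [|[x b] L IHL] //=; rewrite IHL.
have -> : (x + 1 == l) = (x == l - 1) by apply/eqP/eqP; lia.
have -> : (x - 1 == l) = (x == l + 1) by apply/eqP/eqP; lia.
by case: (x == l); case: (x == l - 1); case: (x == l + 1); rewrite /=; lia.
Qed.

Definition III1_mult (m : nat) (l : int) : nat :=
  if ((m.+1)%:Z - l)%R is Posz k then 'C(m.*2, k) else 0.

Lemma weight_mult_III1_labels m l : weight_mult l (III1_labels m) = III1_mult m l.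
Proof.
elim: m l => [|m IHm] l.
  rewrite /weight_mult /III1_mult /=.
  case E: (1%:Z - l) => [[|k]|k].
  - by have -> : l = 1 by lia.
  - by have /negbTE -> : 1 != l by apply/eqP; lia.
  - by have /negbTE -> : 1 != l by apply/eqP; lia.
rewrite /= weight_mult_cg_step !IHm /III1_mult.
have -> : m.+1%:Z - l = (m.+2%:Z - l) - 1 by lia.
have -> : m.+1%:Z - (l - 1) = m.+2%:Z - l by lia.
have -> : m.+1%:Z - (l + 1) = (m.+2%:Z - l) - 2 by lia.
case: (m.+2%:Z - l) => [[|[|k]]|k].
- by rewrite /= bin0.
- by rewrite /= bin0 doubleS !bin1; lia.
- have -> : k.+2%:Z - 1 = k.+1 by lia.
  have -> : k.+2%:Z - 2 = k by lia.
  by rewrite /= doubleS !binS; lia.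
- have -> : Negz k - 1 = Negz k.+1 by lia.
  by have -> : Negz k - 2 = Negz k.+2 by lia.
Qed.

Lemma perm_eq_group (T K : eqType) (key : T -> K) (ks : seq K) (s : seq T) :
  uniq ks -> all (fun x => key x \in ks) s ->
  perm_eq s (flatten [seq [seq x <- s | key x == k] | k <- ks]).
Proof.
elim: ks s => [|k ks IHks] s /=; first by case: s => //= x s /andP[].
move=> /andP[k_ks uniq_ks] s_ks.
rewrite -(perm_filterC (fun x => key x == k) s) perm_cat2l.
set s' := filter _ s.
have s'_ks : all (fun x => key x \in ks) s'.
  rewrite all_filter; apply/allP=> x x_s; apply/implyP=> /= ne_xk.
  by have := allP s_ks x x_s; rewrite inE (negbTE ne_xk).
apply: perm_trans (IHks _ uniq_ks s'_ks) _.
suff -> : [seq [seq x <- s' | key x == k'] | k' <- ks] =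
          [seq [seq x <- s | key x == k'] | k' <- ks] by [].
apply/eq_in_map=> k' k'_ks; rewrite -filter_predI.
apply: eq_filter=> x /=; case: eqP=> // ->.
by apply: contraNneq k_ks => <-.
Qed.

Lemma seq_pair_fst (A : eqType) (B : Type) (a : A) (b0 : B) (s : seq (A * B)) :
  all (fun p => p.1 == a) s ->
  s = [seq (a, nth b0 (map snd s) j) | j <- iota 0 (size s)].
Proof.
move=> s_a; rewrite -(size_map snd) (map_comp (pair a) (nth b0 (map snd s))).
rewrite -/(mkseq _ _) mkseq_nth; elim: s s_a => //= -[x y] s IHs /= /andP[/eqP-> /IHs].
by move=> {1}->.
Qed.

Lemma weight_range_uniq n : uniq (weight_range n).
Proof.
by rewrite map_inj_uniq ?iota_uniq // => i j /addrI [].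
Qed.

Lemma III1_labels_weight m p : p \in III1_labels m -> p.1 \in weight_range m.+1.
Proof.
move=> p_m; have : (0 < weight_mult p.1 (III1_labels m))%N.
  by rewrite -has_count; apply/hasP; exists p.
rewrite weight_mult_III1_labels /III1_mult.
case E: (m.+1%:Z - p.1) => [k|] // /[!bin_gt0] le_k_2m.
by apply/mapP; exists (m.*2 - k)%N; rewrite ?mem_iota; lia.
Qed.

Lemma decompositionE n par : decomposition n par =
  sbigsum (map IIIp (flatten
    [seq [seq (l, par l j) | j <- iota 0 'C(2 * n - 2, `|n%:Z - l|%N)]
    | l <- weight_range n])).
Proof.
by rewrite /decomposition map_flatten -map_comp; congr (sbigsum (flatten _));
  apply: eq_map => l /=; rewrite -map_comp.
Qed.

Lemma III1_labels_of_weight m l : l \in weight_range m.+1 ->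
  let bs := [seq p.2 | p <- III1_labels m & p.1 == l] in
  [seq p <- III1_labels m | p.1 == l] =
  [seq (l, nth false bs j) | j <- iota 0 'C(2 * m.+1 - 2, `|m.+1%:Z - l|%N)].
Proof.
move=> /mapP[k]; rewrite mem_iota => /andP[_ lt_k] el bs.
have -> : 'C(2 * m.+1 - 2, `|m.+1%:Z - l|%N) = size [seq p <- III1_labels m | p.1 == l].
  rewrite size_filter -/(weight_mult _ _) weight_mult_III1_labels /III1_mult.
  have -> : m.+1%:Z - l = Posz (m.*2 - k) by rewrite el; lia.
  by congr 'C(_, _); lia.
by apply: seq_pair_fst; rewrite all_filter; apply/allP=> p _; apply/implyP.
Qed.

Lemma stpow_III1_decomposition n : (1 <= n)%N ->
  exists par, siso (stpow (III 1 false) n) (decomposition n par).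
Proof.
case: n => // m _.
exists (fun l => nth false [seq p.2 | p <- III1_labels m & p.1 == l]).
apply: siso_trans (stpow_III1 m) _; rewrite decompositionE; apply: sbigsum_perm.
have weights : all (fun p : int * bool => p.1 \in weight_range m.+1) (III1_labels m).
  by apply/allP=> p /III1_labels_weight.
apply: perm_trans (perm_eq_group (weight_range_uniq _) weights) _.
by rewrite ((eq_in_map _ _ _).1 (@III1_labels_of_weight m)).
Qed.

Theorem proposition2p3 :
  siso adjoint_gl11 (III 1 false) /\
  forall n : nat, (1 <= n)%N ->
    siso (stpow adjoint_gl11 n) (stpow (III 1 false) n) /\
    exists par : int -> nat -> bool,
      siso (stpow (III 1 false) n) (decomposition n par).
Proof.
split=> [|n n_gt0]; first exact: adjoint_gl11_III1.
split; first exact: siso_stpow adjoint_gl11_III1.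
exact: stpow_III1_decomposition.
Qed.
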